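(* Let $n\ge 4$ and for each $k\in\mathbb{N}$ let $w_k$ be the word $01\cdots(n-1)$. Then the sequence of pointed $I_n$-sets $(I_n(w_k))_{k\in\mathbb{N}}$ does not have the Ramsey property.
   Context: $I_n$ is the monoid under composition of all $f\colon\{0,\dots,n-1\}\to\{0,\dots,n-1\}$ with $f(0)=0$ and $f(i-1)\le f(i)\le f(i-1)+1$ for $0<i<n$. For a finite word $w$ over the alphabet $\{0,\dots,n-1\}$ containing the letter $n-1$, and $f\in I_n$, $f(w)$ is the word obtained by applying $f$ letter by letter; $I_n(w)=\{f(w):f\in I_n\}$ with the action $g\cdot f(w)=(g\circ f)(w)$ and distinguished element $w$ is a pointed $I_n$-set. A pointed $M$-set is an $M$-set $X$ with a distinguished point $x$ with $Mx=X$. For a sequence of sets $(X_k)$, $\langle(X_k)\rangle$ is the set of finite sequences $x_1\cdots x_r$ with $x_i\in X_{m_i}$ for some $m_1<\cdots<m_r$, a partial semigroup under concatenation (product defined iff the index sets can be chosen with all indices of the first before all indices of the second); $M$ acts coordinatewise. A sequence $(u_i)$ is basic if $u_{i_1}\cdots u_{i_r}$ is defined for all $i_1<\cdots<i_r$. $(X_k)$ has the Ramsey property if for every finite coloring of $\langle(X_k)\rangle$ there is a basic sequence $(u_i)$ such that each $u_i$ has as an entry the distinguished element of the relevant $X_k$, and all words $a_0(u_{i_0})\cdots a_l(u_{i_l})$ with $i_0<\cdots<i_l$, $a_j\in M$, at least one $a_j=1_M$, have the same color. *)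

From mathcomp Require Import all_boot.
Set Implicit Arguments. Unset Strict Implicit. Unset Printing Implicit Defensive.

Definition word (n : nat) := seq 'I_n.

Definition inIn (n : nat) (f : 'I_n -> 'I_n) : Prop :=
  (forall i : 'I_n, val i = 0 -> val (f i) = 0) /\
  (forall i j : 'I_n, val j = (val i).+1 ->
       val (f i) <= val (f j) <= (val (f i)).+1).

Definition actw (n : nat) (f : 'I_n -> 'I_n) (w : word n) : word n := map f w.

Definition In_orbit (n : nat) (w : word n) (v : word n) : Prop :=
  exists f, inIn f /\ v = actw f w.

Definition acts (n : nat) (f : 'I_n -> 'I_n) (s : seq (word n)) : seq (word n) :=
  map (actw f) s.

Definition validIdx (n : nat) (X : nat -> word n -> Prop)
    (s : seq (word n)) (ms : seq nat) : Prop :=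
  size ms = size s /\ forall i, i < size s -> X (nth 0 ms i) (nth [::] s i).

(* Membership in <(X_k)>: x_1...x_r (r >= 1) with x_i \in X_(m_i), m_1 < ... < m_r. *)
Definition inProd (n : nat) (X : nat -> word n -> Prop) (s : seq (word n)) : Prop :=
  0 < size s /\ exists ms, sorted ltn ms /\ validIdx X s ms.

(* The iterated partial product s_1 ... s_r is defined: index sets can be
   chosen with all indices of s_j before all indices of s_(j+1). *)
Definition prod_defined (n : nat) (X : nat -> word n -> Prop)
    (ss : seq (seq (word n))) : Prop :=
  (forall j, j < size ss -> 0 < size (nth [::] ss j)) /\
  exists mss : seq (seq nat), size mss = size ss /\
    (forall j, j < size ss -> validIdx X (nth [::] ss j) (nth [::] mss j)) /\
    sorted ltn (flatten mss).

Definition basic (n : nat) (X : nat -> word n -> Prop) (u : nat -> seq (word n)) : Prop :=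
  forall idx : seq nat, idx != [::] -> sorted ltn idx -> prod_defined X (map u idx).

Definition Ramsey (n : nat) (X : nat -> word n -> Prop) (pt : nat -> word n) : Prop :=
  forall (r : nat) (c : seq (word n) -> 'I_r),
  exists u : nat -> seq (word n),
    basic X u /\
    (forall i, exists ms p, sorted ltn ms /\ validIdx X (u i) ms /\
        p < size (u i) /\ nth [::] (u i) p = pt (nth 0 ms p)) /\
    exists col : 'I_r,
      forall (idx : seq nat) (as_ : seq ('I_n -> 'I_n)),
        idx != [::] -> sorted ltn idx -> size as_ = size idx ->
        (forall j, j < size as_ -> inIn (nth id as_ j)) ->
        (exists j, j < size as_ /\ forall x, nth id as_ j x = x) ->
        c (flatten [seq acts a v | '(a, v) <- zip as_ (map u idx)]) = col.

Definition wfull (n : nat) : word n := enum 'I_n.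

(** Colour a product by the number of zeros in its last word that reaches the
    letter 2.  In a monochromatic basic sequence (u_i), compare u_0 u_1 with
    u_0 b(u_1), where b ranges over the two maps of I_n that merge the letter
    2 into 1, resp. 1 into 0, and lower every larger letter by one.  Both send
    exactly the words reaching 3 to words reaching 2, so both colours are read
    off the same word Z of u_1, which reaches 3 because u_1 contains
    01...(n-1).  The colours are the numbers of letters of Z that are 0,
    resp. at most 1; they differ because the letters of a word of I_n(01...(n-1))
    form an initial segment of the alphabet, so Z contains the letter 1. *)

From mathcomp Require Import all_boot.
From mathcomp Require Import zify.

Set Implicit Arguments.
Unset Strict Implicit.
Unset Printing Implicit Defensive.

Section Words.

Variable n : nat.
Implicit Types (w : word n) (f : 'I_n -> 'I_n).

Definition reaches (l : nat) w : bool := has (fun v : 'I_n => l <= val v) w.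

Definition zeros w : nat := count (fun v : 'I_n => val v == 0) w.

(* [inord] is faithful only on counts at most [n], the length of the words of I_n(01...(n-1)). *)
Definition colour (x : seq (word n)) : 'I_n.+1 :=
  inord (zeros (last [::] (filter (reaches 2) x))).

Definition collapse (k : nat) (v : 'I_n) : 'I_n :=
  Ordinal (leq_ltn_trans (leq_subr (k < v) v) (ltn_ord v)).

Lemma collapse_inIn k : inIn (collapse k).
Proof. by split=> [i /= -> | i j /= ->]; lia. Qed.

Lemma reaches_collapse k l w : k < l ->
  reaches l (actw (collapse k) w) = reaches l.+1 w.
Proof. by move=> lt_kl; rewrite /reaches has_map; apply: eq_has => v /=; lia. Qed.

Lemma zeros_collapse0 w : zeros (actw (collapse 0) w) = count (fun v => val v <= 1) w.
Proof. by rewrite /zeros count_map; apply: eq_count => v /=; lia. Qed.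

Lemma zeros_collapseS k w : zeros (actw (collapse k.+1) w) = zeros w.
Proof. by rewrite /zeros count_map; apply: eq_count => v /=; lia. Qed.

Lemma count_le1 w :
  count (fun v => val v <= 1) w = zeros w + count (fun v => val v == 1) w.
Proof. by elim: w => //= v w ->; rewrite /zeros /=; lia. Qed.

Lemma inIn_intermediate f (i : 'I_n) k : inIn f -> k <= val (f i) ->
  exists j : 'I_n, val (f j) = k.
Proof.
case=> f0 fstep; case: i => m lt_mn; elim: m lt_mn k => [|m IHm] lt_mn k le_k.
  by exists (Ordinal lt_mn); move: le_k; rewrite f0 //; lia.
have /andP [_ step] := fstep (Ordinal (ltnW lt_mn)) (Ordinal lt_mn) erefl.
have [->|ne_k] := eqVneq k (f (Ordinal lt_mn)); first by exists (Ordinal lt_mn).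
by apply: (IHm (ltnW lt_mn)); move: le_k ne_k step => /=; lia.
Qed.

Lemma orbit_wfull_has w k : In_orbit (wfull n) w -> reaches k w ->
  has (fun v => val v == k) w.
Proof.
case=> f [fI ->] /hasP [_ /mapP [i _ ->] le_k].
have [j fj] := inIn_intermediate fI le_k.
by apply/hasP; exists (f j); [apply: map_f; rewrite mem_enum | apply/eqP].
Qed.

Lemma size_orbit_wfull w : In_orbit (wfull n) w -> size w = n.
Proof. by case=> f [_ ->]; rewrite size_map size_enum_ord. Qed.

Lemma reaches_wfull k : k < n -> reaches k (wfull n).
Proof. by move=> lt_kn; apply/hasP; exists (Ordinal lt_kn); rewrite ?mem_enum. Qed.

End Words.

Lemma last_filter_cat T (a : pred T) x0 s t : has a t ->
  last x0 (filter a (s ++ t)) = last x0 (filter a t).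
Proof. by rewrite has_count -size_filter filter_cat last_cat; case: (filter a t). Qed.

Lemma last_filter_map T U (f : T -> U) (a : pred U) (b : pred T) x0 s :
  preim f a =1 b -> last (f x0) (filter a (map f s)) = f (last x0 (filter b s)).
Proof. by move=> fab; rewrite filter_map (eq_filter fab) last_map. Qed.

Lemma last_filter_mem (T : eqType) (a : pred T) x0 s : has a s ->
  last x0 (filter a s) \in filter a s.
Proof. by rewrite has_filter; case: (filter a s) => // y t _ /=; exact: mem_last. Qed.

Lemma colour_cat_acts n (f : 'I_n -> 'I_n) s t :
  preim (actw f) (reaches 2) =1 reaches 3 -> has (reaches 3) t ->
  colour (s ++ acts f t) = inord (zeros (actw f (last [::] (filter (reaches 3) t)))).
Proof.
move=> f23 t3; rewrite /colour last_filter_cat; last by rewrite /acts has_map (eq_has f23).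
by rewrite -[[::]]/(actw f [::]) (last_filter_map _ _ f23).
Qed.

Lemma Ramsey_two_blocks n (X : nat -> word n -> Prop) pt r (c : seq (word n) -> 'I_r) :
  Ramsey X pt -> exists (s t : seq (word n)) (col : 'I_r),
    [/\ exists k, pt k \in t, forall w, w \in t -> exists k, X k w
      & forall f, inIn f -> c (s ++ acts f t) = col].
Proof.
move=> /(_ r c) [u [_ [upt [col ucol]]]].
have [ms [p [_ [[_ uX] [lt_p u_p]]]]] := upt 1.
exists (u 0), (u 1), col; split.
- by exists (nth 0 ms p); rewrite -u_p mem_nth.
- by move=> w /(nthP [::]) [i lt_i <-]; exists (nth 0 ms i); apply: uX.
move=> f fI; have idI : inIn (@id 'I_n) by split=> // i j /= ->; lia.
have := ucol [:: 0; 1] [:: id; f] isT isT erefl _ _.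
rewrite /= cats0 /acts /actw (eq_map (@map_id _)) map_id; apply.
- by case=> [|[|]].
- by exists 0.
Qed.

Theorem corollary4p7 (n : nat) : 4 <= n ->
  ~ Ramsey (fun _ : nat => In_orbit (wfull n)) (fun _ : nat => wfull n).
Proof.
move=> le4n /(Ramsey_two_blocks (@colour n)) [s [t [col [[_ wt] orbit_t col_t]]]].
have t3 : has (reaches 3) t by apply/hasP; exists (wfull n); rewrite ?reaches_wfull.
set Z := last [::] (filter (reaches 3) t).
have /[!mem_filter] /andP [Z3 Zt] := last_filter_mem [::] t3.
have [_ Zorb] := orbit_t Z Zt.
have colZ k : k <= 1 -> col = zeros (actw (collapse k) Z) :> nat.
  move=> le_k1; have k23 : preim (actw (collapse k)) (reaches 2) =1 @reaches n 3.
    by move=> w /=; apply: reaches_collapse.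
  rewrite -(col_t _ (collapse_inIn n k)) colour_cat_acts // inordK // ltnS.
  by rewrite (leq_trans (count_size _ _)) // size_map (size_orbit_wfull Zorb).
have := etrans (esym (colZ 0 isT)) (colZ 1 isT).
rewrite zeros_collapse0 zeros_collapseS count_le1 -[RHS]addn0 => /addnI /eqP.
rewrite -leqn0 leqNgt -has_count (orbit_wfull_has Zorb) //.
by apply: sub_has Z3 => v; apply: leq_trans.
Qed.
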